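(* Every (finite or infinite) half graph $\Gamma$ with $|V(\Gamma)|\geq 4$ is prime.
   Context: A bipartite graph $\Gamma$ with bipartition $\{X,Y\}$ is a half graph if there exist a linear order $L$ on $X$ and a bijection $\varphi:X\to Y$ with $E(\Gamma)=\{\{x,\varphi(x')\}: x\leq x'\bmod L\}$. A module of a graph is a set $M$ of vertices such that every vertex outside $M$ is adjacent to all or none of $M$; $\emptyset$, $V(\Gamma)$ and singletons are trivial; $\Gamma$ is prime if $|V(\Gamma)|\geq3$ and all modules are trivial. *)

Definition linear_order_on {V : Type} (X : V -> Prop) (L : V -> V -> Prop) : Prop :=
  (forall x, X x -> L x x) /\
  (forall x y, X x -> X y -> L x y -> L y x -> x = y) /\
  (forall x y z, X x -> X y -> X z -> L x y -> L y z -> L x z) /\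
  (forall x y, X x -> X y -> L x y \/ L y x).

Definition bijection_on {V : Type} (X Y : V -> Prop) (phi : V -> V) : Prop :=
  (forall x, X x -> Y (phi x)) /\
  (forall x x', X x -> X x' -> phi x = phi x' -> x = x') /\
  (forall y, Y y -> exists x, X x /\ phi x = y).

Definition is_bipartition {V : Type} (X Y : V -> Prop) : Prop :=
  (forall v, X v \/ Y v) /\ (forall v, ~ (X v /\ Y v)).

Definition half_graph {V : Type} (adj : V -> V -> Prop) (X Y : V -> Prop) : Prop :=
  is_bipartition X Y /\
  exists (L : V -> V -> Prop) (phi : V -> V),
    linear_order_on X L /\ bijection_on X Y phi /\
    forall u v, adj u v <->
      exists x x', X x /\ X x' /\ L x x' /\
        ((u = x /\ v = phi x') \/ (u = phi x' /\ v = x)).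

Definition is_module {V : Type} (adj : V -> V -> Prop) (M : V -> Prop) : Prop :=
  forall v, ~ M v ->
    (forall m, M m -> adj v m) \/ (forall m, M m -> ~ adj v m).

Definition trivial_set {V : Type} (M : V -> Prop) : Prop :=
  (forall v, ~ M v) \/ (forall v, M v) \/ (exists a, forall v, M v <-> v = a).

Definition at_least_3_vertices (V : Type) : Prop :=
  exists a b c : V, a <> b /\ a <> c /\ b <> c.

Definition at_least_4_vertices (V : Type) : Prop :=
  exists a b c d : V, a <> b /\ a <> c /\ a <> d /\ b <> c /\ b <> d /\ c <> d.

Definition prime_graph {V : Type} (adj : V -> V -> Prop) : Prop :=
  at_least_3_vertices V /\ forall M, is_module adj M -> trivial_set M.

(* In a half graph x is adjacent to phi x' iff x <= x', so any two distinct
   vertices are split by a third one (adjacent to exactly one of them): two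
   members of X by the partner of the smaller one, two members of Y by the
   preimage of the larger one, and x in X and y in Y by phi x.  Hence a module
   with two vertices contains a matched pair {c, phi c}.  Such a module then
   absorbs every d < c (adjacent to phi c, not to c) and every phi d with
   d > c (adjacent to c, not to phi c), and with it the partner of each, so it
   is everything.  Thus all modules of a half graph are trivial; the bound of
   four vertices only serves to provide the three that primality requires. *)

From Stdlib Require Import Classical.

Lemma module_contains_splitter {V : Type} {adj : V -> V -> Prop} {M : V -> Prop}
    (u w v : V) :
  is_module adj M -> M u -> M w -> adj v u -> ~ adj v w -> M v.
Proof.
intros module_M Mu Mw vu not_vw; apply NNPP; intro not_Mv.
destruct (module_M v not_Mv) as [all_adj | no_adj].
- exact (not_vw (all_adj w Mw)).
- exact (no_adj u Mu vu).
Qed.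

Lemma trivial_set_of_pairs_full (V : Type) (M : V -> Prop) :
  (forall u w, M u -> M w -> u <> w -> forall v, M v) -> trivial_set M.
Proof.
intros pair_full.
destruct (classic (exists v, M v)) as [[v Mv] | empty].
- destruct (classic (exists w, M w /\ w <> v)) as [[w [Mw w_v]] | single].
  + right; left; exact (pair_full w v Mw Mv w_v).
  + right; right; exists v; intro u; split.
    * intro Mu; apply NNPP; intro u_v; apply single; eauto.
    * intros ->; exact Mv.
- left; intros v Mv; apply empty; eauto.
Qed.

Section HalfGraph.

Variables (V : Type) (adj : V -> V -> Prop) (X Y : V -> Prop).
Variables (L : V -> V -> Prop) (phi : V -> V).
Hypothesis bipartition : is_bipartition X Y.
Hypothesis L_linear : linear_order_on X L.
Hypothesis phi_bij : bijection_on X Y phi.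
Hypothesis adjE : forall u v, adj u v <->
  exists x x', X x /\ X x' /\ L x x' /\
    ((u = x /\ v = phi x') \/ (u = phi x' /\ v = x)).

Lemma X_not_Y (v : V) : X v -> Y v -> False.
Proof. intros Xv Yv; exact (proj2 bipartition v (conj Xv Yv)). Qed.

Lemma adj_sym (u v : V) : adj u v -> adj v u.
Proof.
rewrite !adjE; intros (x & x' & Xx & Xx' & Lxx' & E).
exists x, x'; tauto.
Qed.

Lemma adj_X_phi (a b : V) : X a -> X b -> adj a (phi b) <-> L a b.
Proof.
destruct phi_bij as [phiY [phi_inj _]].
intros Xa Xb; rewrite adjE; split.
- intros (x & x' & Xx & Xx' & Lxx' & [[-> E] | [E _]]).
  + rewrite (phi_inj b x' Xb Xx' E); exact Lxx'.
  + destruct (X_not_Y a Xa); rewrite E; auto.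
- intros Lab; exists a, b; auto 10.
Qed.

Lemma adj_phi_X (a b : V) : X a -> X b -> adj (phi b) a <-> L a b.
Proof.
intros Xa Xb; rewrite <- adj_X_phi by assumption; split; apply adj_sym.
Qed.

Lemma X_stable (u v : V) : X u -> X v -> ~ adj u v.
Proof.
destruct phi_bij as [phiY _].
intros Xu Xv; rewrite adjE; intros (x & x' & _ & Xx' & _ & [[_ E] | [E _]]).
- apply (X_not_Y v Xv); rewrite E; auto.
- apply (X_not_Y u Xu); rewrite E; auto.
Qed.

Lemma Y_stable (u v : V) : Y u -> Y v -> ~ adj u v.
Proof.
destruct phi_bij as [phiY _].
intros Yu Yv; rewrite adjE; intros (x & x' & Xx & Xx' & _ & [[E _] | [_ E]]).
- apply (X_not_Y u); [rewrite E | ]; auto.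
- apply (X_not_Y v); [rewrite E | ]; auto.
Qed.

Lemma L_asym (a b : V) : X a -> X b -> a <> b -> L a b -> ~ L b a.
Proof.
destruct L_linear as [_ [L_anti _]].
intros Xa Xb a_b Lab Lba; exact (a_b (L_anti a b Xa Xb Lab Lba)).
Qed.

Section Module.

Variable M : V -> Prop.
Hypothesis module_M : is_module adj M.

Lemma module_matched_pair_spreads (c d : V) :
  X c -> X d -> M c -> M (phi c) -> M d /\ M (phi d).
Proof.
destruct L_linear as [L_refl [_ [_ L_total]]].
intros Xc Xd Mc Mpc.
destruct (classic (d = c)) as [-> | d_c]; [auto | ].
destruct (L_total d c Xd Xc) as [Ldc | Lcd].
- assert (Md : M d).
  { apply (module_contains_splitter (phi c) c d module_M Mpc Mc).
    - apply adj_X_phi; assumption.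
    - apply X_stable; assumption. }
  split; [exact Md | ].
  apply (module_contains_splitter d c (phi d) module_M Md Mc).
  + apply adj_phi_X; auto.
  + rewrite adj_phi_X by assumption; exact (L_asym d c Xd Xc d_c Ldc).
- assert (Mpd : M (phi d)).
  { destruct phi_bij as [phiY _].
    apply (module_contains_splitter c (phi c) (phi d) module_M Mc Mpc).
    - apply adj_phi_X; assumption.
    - apply Y_stable; auto. }
  split; [ | exact Mpd].
  apply (module_contains_splitter (phi d) (phi c) d module_M Mpd Mpc).
  + apply adj_X_phi; auto.
  + rewrite adj_X_phi by assumption; exact (L_asym c d Xc Xd (not_eq_sym d_c) Lcd).
Qed.

Lemma module_full_of_matched_pair (c : V) :
  X c -> M c -> M (phi c) -> forall v, M v.
Proof.
destruct phi_bij as [_ [_ phi_onto]].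
intros Xc Mc Mpc v.
destruct (proj1 bipartition v) as [Xv | Yv].
- exact (proj1 (module_matched_pair_spreads c v Xc Xv Mc Mpc)).
- destruct (phi_onto v Yv) as (d & Xd & <-).
  exact (proj2 (module_matched_pair_spreads c d Xc Xd Mc Mpc)).
Qed.

Lemma module_full_of_X_mem (c w : V) :
  X c -> M c -> M w -> ~ adj (phi c) w -> forall v, M v.
Proof.
destruct L_linear as [L_refl _].
intros Xc Mc Mw not_adj; apply (module_full_of_matched_pair c Xc Mc).
apply (module_contains_splitter c w (phi c) module_M Mc Mw); [ | exact not_adj].
apply adj_phi_X; auto.
Qed.

Lemma module_full_of_Y_mem (c w : V) :
  X c -> M (phi c) -> M w -> ~ adj c w -> forall v, M v.
Proof.
destruct L_linear as [L_refl _].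
intros Xc Mpc Mw not_adj; apply (module_full_of_matched_pair c Xc); [ | exact Mpc].
apply (module_contains_splitter (phi c) w c module_M Mpc Mw); [ | exact not_adj].
apply adj_X_phi; auto.
Qed.

Lemma module_full_of_pair (u w : V) : M u -> M w -> u <> w -> forall v, M v.
Proof.
destruct L_linear as [_ [_ [_ L_total]]].
destruct phi_bij as [_ [_ phi_onto]].
intros Mu Mw u_w.
destruct (proj1 bipartition u) as [Xu | Yu];
  destruct (proj1 bipartition w) as [Xw | Yw].
- destruct (L_total u w Xu Xw) as [Luw | Lwu].
  + apply (module_full_of_X_mem u w Xu Mu Mw).
    rewrite adj_phi_X by assumption; exact (L_asym u w Xu Xw u_w Luw).
  + apply (module_full_of_X_mem w u Xw Mw Mu).
    rewrite adj_phi_X by assumption; exact (L_asym w u Xw Xu (not_eq_sym u_w) Lwu).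
- apply (module_full_of_X_mem u w Xu Mu Mw), Y_stable; [apply phi_bij | ]; assumption.
- apply (module_full_of_X_mem w u Xw Mw Mu), Y_stable; [apply phi_bij | ]; assumption.
- destruct (phi_onto u Yu) as (a & Xa & <-).
  destruct (phi_onto w Yw) as (b & Xb & <-).
  assert (a_b : a <> b) by (intros ->; exact (u_w eq_refl)).
  destruct (L_total a b Xa Xb) as [Lab | Lba].
  + apply (module_full_of_Y_mem b (phi a) Xb Mw Mu).
    rewrite adj_X_phi by assumption; exact (L_asym a b Xa Xb a_b Lab).
  + apply (module_full_of_Y_mem a (phi b) Xa Mu Mw).
    rewrite adj_X_phi by assumption; exact (L_asym b a Xb Xa (not_eq_sym a_b) Lba).
Qed.

End Module.

End HalfGraph.

Theorem corollary5p4 (V : Type) (adj : V -> V -> Prop) (X Y : V -> Prop) :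
  half_graph adj X Y -> at_least_4_vertices V -> prime_graph adj.
Proof.
intros [bipartition (L & phi & L_linear & phi_bij & adjE)] four.
split.
- destruct four as (a & b & c & d & ab & ac & _ & bc & _).
  exists a, b, c; auto.
- intros M module_M; apply trivial_set_of_pairs_full.
  eapply module_full_of_pair; eassumption.
Qed.
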